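(* Let $\mathcal{K}^{\langle\infty\rangle}$ be a planar unbounded simple nested fractal whose number of essential fixed points is $k=4$. Then $\mathcal{K}^{\langle\infty\rangle}$ has the good labelling property.
   Context: Setting: $L>1$, $N\ge2$, $\nu_1=0,\dots,\nu_N\in\mathbb{R}^2$, $\Psi_i(x)=x/L+\nu_i$, and $\mathcal{K}^{\langle 0\rangle}=\bigcup_i\Psi_i(\mathcal{K}^{\langle 0\rangle})$ is a planar simple nested fractal (essential fixed points $V_0^{\langle0\rangle}$: fixed points $x$ for which there are another fixed point $y$ and $\Psi_i\ne\Psi_j$ with $\Psi_i(x)=\Psi_j(y)$; open set condition, nesting, symmetry with respect to perpendicular bisectors of pairs of essential fixed points, connectivity); $k=\#V_0^{\langle0\rangle}$, and $V_0^{\langle0\rangle}$ spans a regular $k$-gon. $\mathcal{K}^{\langle M\rangle}=L^M\mathcal{K}^{\langle 0\rangle}$, $\mathcal{K}^{\langle\infty\rangle}=\bigcup_{M\ge0}\mathcal{K}^{\langle M\rangle}$. An $M$-complex is $\Delta_M=\mathcal{K}^{\langle M\rangle}+\nu_{\Delta_M}$ with $\nu_{\Delta_M}=\sum_{j=M+1}^{J}L^j\nu_{i_j}$ ($J\ge M+1$), vertex set $V(\Delta_M)=L^MV_0^{\langle0\rangle}+\nu_{\Delta_M}$; $V_M^{\langle M\rangle}=L^MV_0^{\langle0\rangle}$ and $V_M^{\langle\infty\rangle}$ is the union of all $V(\Delta_M)$. With $\mathcal{A}$ an alphabet of $k$ symbols and $\mathcal{R}_M$ the $k$ rotations about the barycenter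 of $\mathcal{K}^{\langle M\rangle}$ preserving $V_M^{\langle M\rangle}$, a good labelling function of order $M$ is $\ell_M:V_M^{\langle\infty\rangle}\to\mathcal{A}$, bijective on $V_M^{\langle M\rangle}$, such that for each $M$-complex $\Delta_M=\mathcal{K}^{\langle M\rangle}+\nu_{\Delta_M}$ there is $R_{\Delta_M}\in\mathcal{R}_M$ with $\ell_M(v)=\ell_M(R_{\Delta_M}(v-\nu_{\Delta_M}))$, $v\in V(\Delta_M)$. The good labelling property means that a good labelling function of some order $M\in\mathbb{Z}$ exists. *)

From Stdlib Require Import Reals List ZArith Relations.
Open Scope R_scope.

Definition pt := (R * R)%type.
Definition padd (p q : pt) : pt := (fst p + fst q, snd p + snd q).
Definition psub (p q : pt) : pt := (fst p - fst q, snd p - snd q).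
Definition pscale (c : R) (p : pt) : pt := (c * fst p, c * snd p).
Definition dot (p q : pt) : R := fst p * fst q + snd p * snd q.
Definition dist (p q : pt) : R := sqrt (dot (psub p q) (psub p q)).

Definition img (f : pt -> pt) (S : pt -> Prop) : pt -> Prop :=
  fun z => exists x, S x /\ z = f x.

Definition is_open (U : pt -> Prop) : Prop :=
  forall x, U x -> exists e, 0 < e /\ forall y, dist x y < e -> U y.
Definition is_closed (S : pt -> Prop) : Prop :=
  forall x, (forall e, 0 < e -> exists y, S y /\ dist x y < e) -> S x.
Definition is_bounded (S : pt -> Prop) : Prop :=
  exists B, forall x, S x -> dist (0, 0) x <= B.
Definition nonempty (S : pt -> Prop) : Prop := exists x, S x.

Definition set_card (S : pt -> Prop) (k : nat) : Prop :=
  exists l : list pt, NoDup l /\ length l = k /\ forall x, S x <-> In x l.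

(* the similitudes Psi_i(x) = x/L + nu_i, i = 0..N-1 (index 0 plays the role of 1) *)
Definition Psi (L : R) (nu : nat -> pt) (i : nat) (x : pt) : pt :=
  padd (pscale (/ L) x) (nu i).

Definition fixed_pt (L : R) (N : nat) (nu : nat -> pt) (x : pt) : Prop :=
  exists i, (i < N)%nat /\ Psi L nu i x = x.

Definition V0 (L : R) (N : nat) (nu : nat -> pt) (x : pt) : Prop :=
  fixed_pt L N nu x /\
  exists y i j, fixed_pt L N nu y /\ (i < N)%nat /\ (j < N)%nat /\
    Psi L nu i <> Psi L nu j /\ Psi L nu i x = Psi L nu j y.

Definition attractor (L : R) (N : nat) (nu : nat -> pt) (K : pt -> Prop) : Prop :=
  nonempty K /\ is_closed K /\ is_bounded K /\
  forall z, K z <-> exists i, (i < N)%nat /\ img (Psi L nu i) K z.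

Definition OSC (L : R) (N : nat) (nu : nat -> pt) : Prop :=
  exists U, is_open U /\ is_bounded U /\ nonempty U /\
    (forall i, (i < N)%nat -> forall z, img (Psi L nu i) U z -> U z) /\
    (forall i j, (i < N)%nat -> (j < N)%nat -> i <> j ->
       forall z, ~ (img (Psi L nu i) U z /\ img (Psi L nu j) U z)).

Definition nesting (L : R) (N : nat) (nu : nat -> pt) (K : pt -> Prop) : Prop :=
  forall i j, (i < N)%nat -> (j < N)%nat -> i <> j ->
    forall z, (img (Psi L nu i) K z /\ img (Psi L nu j) K z) <->
              (img (Psi L nu i) (V0 L N nu) z /\ img (Psi L nu j) (V0 L N nu) z).

Definition refl_bisector (x y z : pt) : pt :=
  let d := psub y x in
  let m := pscale (/ 2) (padd x y) in
  psub z (pscale (2 * dot (psub z m) d / dot d d) d).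

Definition symmetry (L : R) (N : nat) (nu : nat -> pt) : Prop :=
  forall i x y, (i < N)%nat -> V0 L N nu x -> V0 L N nu y -> x <> y ->
    exists j, (j < N)%nat /\
      forall z, img (refl_bisector x y) (img (Psi L nu i) (V0 L N nu)) z <->
                img (Psi L nu j) (V0 L N nu) z.

Definition edge_m1 (L : R) (N : nat) (nu : nat -> pt) (x y : pt) : Prop :=
  exists i, (i < N)%nat /\ img (Psi L nu i) (V0 L N nu) x /\
                           img (Psi L nu i) (V0 L N nu) y.
Definition Vm1 (L : R) (N : nat) (nu : nat -> pt) (x : pt) : Prop :=
  exists i, (i < N)%nat /\ img (Psi L nu i) (V0 L N nu) x.
Definition connectivity (L : R) (N : nat) (nu : nat -> pt) : Prop :=
  forall x y, Vm1 L N nu x -> Vm1 L N nu y ->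
    clos_refl_trans pt (edge_m1 L N nu) x y.

Definition simple_nested_fractal (L : R) (N : nat) (nu : nat -> pt)
    (K : pt -> Prop) : Prop :=
  1 < L /\ (2 <= N)%nat /\ nu 0%nat = (0, 0) /\
  attractor L N nu K /\ OSC L N nu /\ nesting L N nu K /\
  symmetry L N nu /\ connectivity L N nu.

(* admissible words (i_{M+1}, ..., i_J), J >= M+1 *)
Definition valid_word (N : nat) (w : list nat) : Prop :=
  w <> nil /\ forall i, In i w -> (i < N)%nat.

Fixpoint word_shift (L : R) (nu : nat -> pt) (e : Z) (w : list nat) : pt :=
  match w with
  | nil => (0, 0)
  | i :: w' => padd (pscale (powerRZ L e) (nu i)) (word_shift L nu (e + 1)%Z w')
  end.

(* nu_{Delta_M} = sum_{j=M+1}^J L^j nu_{i_j} *)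
Definition complex_shift (L : R) (nu : nat -> pt) (M : Z) (w : list nat) : pt :=
  word_shift L nu (M + 1)%Z w.

Definition VMM (L : R) (N : nat) (nu : nat -> pt) (M : Z) (x : pt) : Prop :=
  exists v, V0 L N nu v /\ x = pscale (powerRZ L M) v.

Definition Vcomplex (L : R) (N : nat) (nu : nat -> pt) (M : Z) (w : list nat)
    (x : pt) : Prop :=
  exists v, VMM L N nu M v /\ x = padd v (complex_shift L nu M w).

Definition VMinf (L : R) (N : nat) (nu : nat -> pt) (M : Z) (x : pt) : Prop :=
  exists w, valid_word N w /\ Vcomplex L N nu M w x.

Definition rot (th : R) (p : pt) : pt :=
  (cos th * fst p - sin th * snd p, sin th * fst p + cos th * snd p).
Definition rotation (c : pt) (th : R) (x : pt) : pt := padd c (rot th (psub x c)).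

(* R_M: the rotations of the plane preserving V_M^<M> (necessarily about the
   barycenter, k of them) *)
Definition in_RM (L : R) (N : nat) (nu : nat -> pt) (M : Z) (f : pt -> pt) : Prop :=
  (exists c th, forall x, f x = rotation c th x) /\
  (forall x, VMM L N nu M x -> VMM L N nu M (f x)) /\
  (forall y, VMM L N nu M y -> exists x, VMM L N nu M x /\ f x = y).

Definition good_labelling (L : R) (N : nat) (nu : nat -> pt) (k : nat) (M : Z)
    (lab : pt -> nat) : Prop :=
  (forall x, VMinf L N nu M x -> (lab x < k)%nat) /\
  (forall x y, VMM L N nu M x -> VMM L N nu M y -> lab x = lab y -> x = y) /\
  (forall a, (a < k)%nat -> exists x, VMM L N nu M x /\ lab x = a) /\
  (forall w, valid_word N w ->
     exists f, in_RM L N nu M f /\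
       forall v, Vcomplex L N nu M w v ->
         lab v = lab (f (psub v (complex_shift L nu M w)))).

Definition good_labelling_property (L : R) (N : nat) (nu : nat -> pt) : Prop :=
  exists k, set_card (V0 L N nu) k /\
    exists (M : Z) (lab : pt -> nat), good_labelling L N nu k M lab.

(* The symmetry axiom forces the four essential fixed points to be the vertices g +- p, g +- q of
   a parallelogram centred at their barycenter g.  Reflections in the perpendicular bisectors of
   pairs of essential fixed points permute V_{-1}, so they fix its barycenter G, and V_0 is
   concyclic about G; they also map the cell Psi_0(V_0) onto another cell, so V_0 is symmetric about
   the parallel axes through its own barycenter, which forces G onto these axes and hence G = g.
   Four concyclic points whose barycenter is the centre form two diameters.

   Nesting then shows that two 0-complexes sharing a point see it at the same or at antipodal
   positions of V_0.  Across such a junction the shift of the complex changes by v - antipode v,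
   which changes the linear coordinate diag_coord by +-1.  So labelling each 0-complex through the
   identity or through the half-turn about g, according to the parity of the integer part of
   diag_coord of its shift, is consistent on shared vertices: a good labelling of order 0. *)

From Pilot Require Import Defs.
From Stdlib Require Import Reals List ZArith Lra Lia Psatz Classical ClassicalEpsilon Permutation
  FinFun.
Import ListNotations.
Open Scope R_scope.

Definition pt_eq_dec (p q : pt) : {p = q} + {p <> q}.
Proof. decide equality; apply Req_EM_T. Defined.

(* The occurrence test matters: a destructed section variable stays in the context. *)
Ltac destruct_pts := repeat match goal with
  | p : pt |- _ =>
      match goal with
      | |- context [p] => destruct p
      | _ : context [p] |- _ => destruct p
      end
  end.

Definition dist2 (a b : pt) : R := dot (psub a b) (psub a b).
Definition cross (a b : pt) : R := fst a * snd b - snd a * fst b.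

Ltac pt_coords :=
  unfold dist2, cross, dot, padd, psub, pscale in *; destruct_pts; simpl in *;
  repeat match goal with H : (_, _) = (_, _) |- _ => injection H; clear H; intros end.

Lemma dot_self_nonneg u : 0 <= dot u u.
Proof. destruct u as [u1 u2]; unfold dot; simpl; nra. Qed.

Lemma dot_self_eq0 u : dot u u = 0 -> u = (0, 0).
Proof. destruct u as [u1 u2]; unfold dot; simpl; intros H. f_equal; nra. Qed.

Lemma dot_self_pos u : u <> (0, 0) -> 0 < dot u u.
Proof.
  intros Hu. destruct u as [u1 u2]; unfold dot; simpl.
  destruct (Rle_lt_or_eq_dec 0 (u1 * u1 + u2 * u2)) as [|E]; [nra | lra |].
  exfalso; apply Hu, dot_self_eq0; unfold dot; simpl; lra.
Qed.

Lemma psub_eq0 a b : psub a b = (0, 0) <-> a = b.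
Proof. split; intros E; [|subst]; pt_coords; f_equal; lra. Qed.

(* Lagrange's identity in the plane: |u|^2 |v|^2 = (u.v)^2 + (u x v)^2. *)
Lemma dot_cross_eq0 u v : dot u v = 0 -> cross u v = 0 -> u = (0, 0) \/ v = (0, 0).
Proof.
  intros Hd Hc.
  assert (E : dot u u * dot v v = 0).
  { replace (dot u u * dot v v) with (dot u v * dot u v + cross u v * cross u v)
      by (pt_coords; ring).
    rewrite Hd, Hc; ring. }
  apply Rmult_integral in E as [E|E]; [left|right]; apply dot_self_eq0; exact E.
Qed.

Lemma orthogonal_to_basis_eq0 u a b : dot u a = 0 -> dot u b = 0 -> cross a b <> 0 -> u = (0, 0).
Proof.
  destruct u as [u1 u2], a as [a1 a2], b as [b1 b2]. unfold dot, cross; simpl. intros Ha Hb Hc.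
  assert (E1 : u1 * (a1 * b2 - a2 * b1) = 0).
  { replace (u1 * (a1 * b2 - a2 * b1)) with (b2 * (u1 * a1 + u2 * a2) - a2 * (u1 * b1 + u2 * b2))
      by ring. rewrite Ha, Hb; ring. }
  assert (E2 : u2 * (a1 * b2 - a2 * b1) = 0).
  { replace (u2 * (a1 * b2 - a2 * b1)) with (a1 * (u1 * b1 + u2 * b2) - b1 * (u1 * a1 + u2 * a2))
      by ring. rewrite Ha, Hb; ring. }
  apply Rmult_integral in E1 as [E1|]; [|contradiction].
  apply Rmult_integral in E2 as [E2|]; [|contradiction].
  subst; reflexivity.
Qed.

Lemma orthogonal_same_line_cross x y s : s <> (0, 0) -> dot x s = 0 -> dot y s = 0 -> cross x y = 0.
Proof.
  intros Hs Hx Hy. pose proof (dot_self_pos s Hs) as Hss.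
  apply (Rmult_eq_reg_r (dot s s)); [|lra].
  replace (cross x y * dot s s) with (dot x s * cross s y - cross s x * dot y s)
    by (pt_coords; ring).
  rewrite Hx, Hy; ring.
Qed.

Lemma parallel_same_norm x y : cross x y = 0 -> dot x x = dot y y ->
  x = y \/ x = pscale (-1) y.
Proof.
  intros Hc Hn.
  assert (Hd : dot (psub x y) (padd x y) = 0) by (pt_coords; nra).
  assert (Hc' : cross (psub x y) (padd x y) = 0) by (pt_coords; nra).
  destruct (dot_cross_eq0 _ _ Hd Hc') as [E|E].
  - left; apply psub_eq0; exact E.
  - right; pt_coords; f_equal; lra.
Qed.

Lemma dist2_diff_dot a b o p :
  2 * dot (psub p o) (psub b a) = (dist2 b o - dist2 a o) - (dist2 b p - dist2 a p).
Proof. pt_coords; ring. Qed.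

Lemma collinear_scale u w : u <> (0, 0) -> cross u w = 0 -> w = pscale (dot w u / dot u u) u.
Proof.
  intros Hu Hc. pose proof (dot_self_pos u Hu) as Hp.
  destruct u as [u1 u2], w as [w1 w2]; pt_coords.
  f_equal; apply (Rmult_eq_reg_r (u1 * u1 + u2 * u2)); try lra; field_simplify; try lra.
  - replace (w1 * u1 ^ 2 + w1 * u2 ^ 2) with (w1 * u1 * u1 + w2 * u2 * u1 - u2 * (u1 * w2 - u2 * w1))
      by ring. rewrite Hc; ring.
  - replace (w2 * u1 ^ 2 + w2 * u2 ^ 2) with (w1 * u1 * u2 + w2 * u2 * u2 + u1 * (u1 * w2 - u2 * w1))
      by ring. rewrite Hc; ring.
Qed.

Lemma concyclic_not_collinear a b c o : dist2 a o = dist2 b o -> dist2 a o = dist2 c o ->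
  a <> b -> a <> c -> b <> c -> cross (psub b a) (psub c a) <> 0.
Proof.
  intros Hb Hc Nab Nac Nbc Hcr.
  assert (Hu : psub b a <> (0, 0)) by (rewrite psub_eq0; auto).
  pose proof (collinear_scale _ _ Hu Hcr) as Hw.
  set (lam := dot (psub c a) (psub b a) / dot (psub b a) (psub b a)) in Hw.
  assert (Hchord : forall x, dist2 a o = dist2 x o ->
            2 * dot (psub a o) (psub x a) + dot (psub x a) (psub x a) = 0).
  { intros x Hx. replace 0 with (dist2 x o - dist2 a o) by lra.
    pt_coords; ring. }
  assert (Hlam : lam * (lam - 1) * dot (psub b a) (psub b a) = 0).
  { pose proof (Hchord b Hb) as H1. pose proof (Hchord c Hc) as H2. rewrite Hw in H2.
    transitivity ((2 * dot (psub a o) (pscale lam (psub b a))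
                   + dot (pscale lam (psub b a)) (pscale lam (psub b a)))
                  - lam * (2 * dot (psub a o) (psub b a) + dot (psub b a) (psub b a))).
    - pt_coords; ring.
    - rewrite H1, H2; ring. }
  apply Rmult_integral in Hlam as [Hlam|Hlam]; [|pose proof (dot_self_pos _ Hu); lra].
  apply Rmult_integral in Hlam as [Hlam|Hlam]; rewrite ?Hlam in Hw.
  - apply Nac. pt_coords. f_equal; lra.
  - apply Nbc. replace lam with 1 in Hw by lra. pt_coords. f_equal; lra.
Qed.

Lemma three_points_unique_center a b c o p :
  dist2 a o = dist2 b o -> dist2 a o = dist2 c o ->
  dist2 a p = dist2 b p -> dist2 a p = dist2 c p ->
  a <> b -> a <> c -> b <> c -> o = p.
Proof.
  intros Hbo Hco Hbp Hcp Nab Nac Nbc. symmetry. apply psub_eq0.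
  apply (orthogonal_to_basis_eq0 _ (psub b a) (psub c a)).
  - pose proof (dist2_diff_dot a b o p); lra.
  - pose proof (dist2_diff_dot a c o p); lra.
  - apply (concyclic_not_collinear a b c o); auto.
Qed.

Lemma zero_sum_equal_norm_antipode a b c d :
  dot a a = dot b b -> dot a a = dot c c -> dot a a = dot d d ->
  padd (padd a b) (padd c d) = (0, 0) ->
  b = pscale (-1) a \/ c = pscale (-1) a \/ d = pscale (-1) a.
Proof.
  intros Hb Hc Hd Hsum.
  destruct (pt_eq_dec (padd a b) (0, 0)) as [Hs|Hs].
  { left. pt_coords. f_equal; lra. }
  assert (Hcd : padd c d = pscale (-1) (padd a b)) by (pt_coords; f_equal; lra).
  assert (Hx : dot (psub a b) (padd a b) = 0) by (clear - Hb; pt_coords; nra).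
  assert (Hy : dot (psub c d) (padd a b) = 0).
  { assert (E : dot (psub c d) (padd c d) = 0) by (clear - Hc Hd; pt_coords; nra).
    rewrite Hcd in E. clear - E. pt_coords. nra. }
  assert (Hn : dot (psub a b) (psub a b) = dot (psub c d) (psub c d))
    by (clear - Hb Hc Hd Hcd; pt_coords; nra).
  destruct (parallel_same_norm _ _ (orthogonal_same_line_cross _ _ _ Hs Hx Hy) Hn) as [E|E];
    clear - Hcd E; pt_coords; [right; right | right; left]; f_equal; lra.
Qed.

Lemma two_diameters_frame G a b c d :
  psub b G = pscale (-1) (psub a G) -> psub d G = pscale (-1) (psub c G) ->
  dist2 a G = dist2 c G -> a <> b -> a <> c -> b <> c ->
  exists p q, cross p q <> 0 /\
    a = padd G p /\ b = psub G p /\ c = padd G q /\ d = psub G q.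
Proof.
  intros Hb Hd Hac Nab Nac Nbc. exists (psub a G), (psub c G). split; [|repeat split].
  - intros Hcr. apply (concyclic_not_collinear a b c G); auto; clear - Hb Hcr; pt_coords; nra.
  - pt_coords; f_equal; ring.
  - clear - Hb; pt_coords; f_equal; lra.
  - pt_coords; f_equal; ring.
  - clear - Hd; pt_coords; f_equal; lra.
Qed.

Definition psum (l : list pt) : pt := fold_right padd (0, 0) l.
Definition barycenter (l : list pt) : pt := pscale (/ INR (length l)) (psum l).

Lemma NoDup4 (a b c d : pt) : NoDup [a; b; c; d] ->
  a <> b /\ a <> c /\ a <> d /\ b <> c /\ b <> d /\ c <> d.
Proof.
  intros H. inversion H as [|? ? Ha H1]; subst. inversion H1 as [|? ? Hb H2]; subst.
  inversion H2 as [|? ? Hc H3]; subst. simpl in *. intuition congruence.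
Qed.

Lemma centered_concyclic_four l G r : NoDup l -> length l = 4%nat ->
  (forall v, In v l -> dist2 v G = r) -> barycenter l = G ->
  exists p q, cross p q <> 0 /\
    forall v, In v l <-> v = padd G p \/ v = psub G p \/ v = padd G q \/ v = psub G q.
Proof.
  intros Hnd Hlen Hr Hbar.
  destruct l as [|v1 [|v2 [|v3 [|v4 [|]]]]]; simpl in Hlen; try discriminate.
  pose proof (NoDup4 _ _ _ _ Hnd) as (N12 & N13 & N14 & N23 & N24 & N34).
  assert (H2 : dist2 v1 G = dist2 v2 G) by (rewrite !Hr; simpl; auto).
  assert (H3 : dist2 v1 G = dist2 v3 G) by (rewrite !Hr; simpl; auto).
  assert (H4 : dist2 v1 G = dist2 v4 G) by (rewrite !Hr; simpl; auto).
  assert (Hsum : padd (padd (psub v1 G) (psub v2 G)) (padd (psub v3 G) (psub v4 G)) = (0, 0)).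
  { unfold barycenter, psum in Hbar. simpl in Hbar. pt_coords. f_equal; lra. }
  destruct (zero_sum_equal_norm_antipode _ _ _ _ H2 H3 H4 Hsum) as [E|[E|E]].
  - assert (E' : psub v4 G = pscale (-1) (psub v3 G)) by (pt_coords; f_equal; lra).
    destruct (two_diameters_frame G v1 v2 v3 v4) as (p & q & Hpq & -> & -> & -> & ->); auto.
    exists p, q; split; auto; intros v; simpl; intuition congruence.
  - assert (E' : psub v4 G = pscale (-1) (psub v2 G)) by (pt_coords; f_equal; lra).
    destruct (two_diameters_frame G v1 v3 v2 v4) as (p & q & Hpq & -> & -> & -> & ->); auto.
    exists p, q; split; auto; intros v; simpl; intuition congruence.
  - assert (E' : psub v3 G = pscale (-1) (psub v2 G)) by (pt_coords; f_equal; lra).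
    destruct (two_diameters_frame G v1 v4 v2 v3) as (p & q & Hpq & -> & -> & -> & ->); auto.
    exists p, q; split; auto; intros v; simpl; intuition congruence.
Qed.

Lemma psum_cons z l : psum (z :: l) = padd z (psum l).
Proof. reflexivity. Qed.

Lemma psum_perm l l' : Permutation l l' -> psum l = psum l'.
Proof. induction 1; simpl; try congruence; pt_coords; f_equal; ring. Qed.

Definition refl_line (h d z : pt) : pt := psub z (pscale (2 * dot (psub z h) d / dot d d) d).

Lemma refl_bisectorE x y : refl_bisector x y = refl_line (pscale (/ 2) (padd x y)) (psub y x).
Proof. reflexivity. Qed.

Lemma refl_lineK h d z : dot d d <> 0 -> refl_line h d (refl_line h d z) = z.
Proof. intros Hd. unfold refl_line; pt_coords; f_equal; field; auto. Qed.

Lemma refl_line_inj h d a b : dot d d <> 0 -> refl_line h d a = refl_line h d b -> a = b.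
Proof. intros Hd E. rewrite <- (refl_lineK h d a), <- (refl_lineK h d b), E; auto. Qed.

Lemma refl_line_dist2 h d a b : dot d d <> 0 ->
  dist2 (refl_line h d a) (refl_line h d b) = dist2 a b.
Proof. intros Hd. unfold refl_line; pt_coords; field; auto. Qed.

Lemma psub_pscale_id d c z : dot d d <> 0 -> psub z (pscale c d) = z -> c = 0.
Proof.
  intros Hd E. apply (Rmult_eq_reg_r (dot d d)); auto. rewrite Rmult_0_l.
  destruct d as [d1 d2]. pt_coords.
  replace (c * (d1 * d1 + d2 * d2)) with ((c * d1) * d1 + (c * d2) * d2) by ring.
  replace (c * d1) with 0 by lra. replace (c * d2) with 0 by lra. ring.
Qed.

Lemma refl_line_fixed h d z : dot d d <> 0 -> refl_line h d z = z -> dot (psub z h) d = 0.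
Proof.
  intros Hd E. apply psub_pscale_id in E; auto.
  replace (dot (psub z h) d) with (2 * dot (psub z h) d / dot d d * dot d d / 2) by (field; auto).
  rewrite E. unfold Rdiv. ring.
Qed.

Lemma psum_map_refl_line h d l : dot d d <> 0 ->
  psum (map (refl_line h d) l) =
  psub (psum l) (pscale (2 * (dot (psum l) d - INR (length l) * dot h d) / dot d d) d).
Proof.
  intros Hd. induction l as [|z l IH]; cbn [map length]; rewrite ?psum_cons.
  - pt_coords; f_equal; field; auto.
  - rewrite IH, S_INR. unfold refl_line. pt_coords. f_equal; field; auto.
Qed.

Lemma refl_line_perm_barycenter h d l : dot d d <> 0 -> l <> [] ->
  Permutation (map (refl_line h d) l) l -> dot (psub (barycenter l) h) d = 0.
Proof.
  intros Hd Hl Hperm. apply psum_perm in Hperm. rewrite psum_map_refl_line in Hperm by auto.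
  apply psub_pscale_id in Hperm; auto.
  assert (Hn : INR (length l) <> 0) by (apply not_0_INR; destruct l; [contradiction | discriminate]).
  replace (dot (psub (barycenter l) h) d) with
    (2 * (dot (psum l) d - INR (length l) * dot h d) / dot d d * dot d d / (2 * INR (length l))).
  - rewrite Hperm. unfold Rdiv. ring.
  - unfold barycenter. generalize (psum l) (INR (length l)) Hn. intros S n Hn'.
    pt_coords. field. auto.
Qed.

Lemma Psi_inj L nu i x y : L <> 0 -> Psi L nu i x = Psi L nu i y -> x = y.
Proof.
  intros HL E. unfold Psi in E. destruct (nu i). pt_coords.
  assert (/ L <> 0) by (apply Rinv_neq_0_compat; auto).
  f_equal; apply (Rmult_eq_reg_l (/ L)); auto; lra.
Qed.

Lemma psum_map_Psi L nu i l :
  psum (map (Psi L nu i) l) = padd (pscale (/ L) (psum l)) (pscale (INR (length l)) (nu i)).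
Proof.
  unfold Psi. destruct (nu i) as [n1 n2].
  induction l as [|z l IH]; cbn [map length]; rewrite ?psum_cons.
  - pt_coords; f_equal; ring.
  - rewrite IH, S_INR. pt_coords. f_equal; ring.
Qed.

(* Comparing the barycenters of both sides pins down the translation between the two cells. *)
Lemma reflected_cell_symmetric L nu i j h d l : L <> 0 -> dot d d <> 0 ->
  Permutation (map (fun z => refl_line h d (Psi L nu i z)) l) (map (Psi L nu j) l) ->
  forall a, In a l -> In (refl_line (barycenter l) d a) l.
Proof.
  intros HL Hd Hperm a Ha.
  assert (Hin : In (refl_line h d (Psi L nu i a)) (map (Psi L nu j) l)).
  { apply (Permutation_in _ Hperm). apply (in_map (fun z => refl_line h d (Psi L nu i z))), Ha. }
  apply in_map_iff in Hin as [a' [Ea' Ha']].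
  replace (refl_line (barycenter l) d a) with a'; auto.
  apply psum_perm in Hperm.
  rewrite <- (map_map (Psi L nu i) (refl_line h d)), psum_map_refl_line, length_map,
    !psum_map_Psi in Hperm; auto.
  assert (Hn : INR (length l) <> 0) by (apply not_0_INR; destruct l; [contradiction | discriminate]).
  unfold barycenter, refl_line, Psi in *.
  revert Hperm Ea'. generalize (psum l) (INR (length l)) Hn. intros S n Hn' Hperm Ea'.
  destruct (nu i) as [ni1 ni2], (nu j) as [nj1 nj2], a as [a1 a2], a' as [b1 b2],
    h as [h1 h2], d as [d1 d2], S as [s1 s2].
  unfold dot, padd, psub, pscale in *; simpl in *.
  injection Hperm; injection Ea'; intros B2 B1 P2 P1.
  set (c := 2 * ((/ L * s1 + n * ni1) * d1 + (/ L * s2 + n * ni2) * d2 - n * (h1 * d1 + h2 * d2))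
            / (d1 * d1 + d2 * d2)) in *.
  set (k := 2 * ((/ L * a1 + ni1 - h1) * d1 + (/ L * a2 + ni2 - h2) * d2)
            / (d1 * d1 + d2 * d2)) in *.
  assert (N1 : nj1 = ni1 - c * d1 / n)
    by (apply (Rmult_eq_reg_l n); auto; field_simplify; auto; lra).
  assert (N2 : nj2 = ni2 - c * d2 / n)
    by (apply (Rmult_eq_reg_l n); auto; field_simplify; auto; lra).
  replace b1 with (L * (/ L * a1 + ni1 - k * d1 - nj1)) by (rewrite <- B1; field; auto).
  replace b2 with (L * (/ L * a2 + ni2 - k * d2 - nj2)) by (rewrite <- B2; field; auto).
  rewrite N1, N2. unfold c, k. f_equal; field; auto.
Qed.

Lemma dist_toward x z c : 0 <= c -> Defs.dist x (padd x (pscale c (psub z x))) = c * Defs.dist x z.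
Proof.
  intros Hc. unfold Defs.dist.
  replace (dot (psub x (padd x (pscale c (psub z x)))) (psub x (padd x (pscale c (psub z x)))))
    with (c * c * dot (psub x z) (psub x z)) by (pt_coords; ring).
  rewrite sqrt_mult by (apply Rmult_le_pos || apply dot_self_nonneg; auto).
  rewrite sqrt_square; auto.
Qed.

Lemma Psi_fixed_form L nu i x z :
  Psi L nu i x = x -> Psi L nu i z = padd x (pscale (/ L) (psub z x)).
Proof.
  unfold Psi. destruct (nu i) as [n1 n2], x as [x1 x2]. intros Hfix. pt_coords.
  f_equal; [replace n1 with (x1 - / L * x1) by lra | replace n2 with (x2 - / L * x2) by lra]; ring.
Qed.

Lemma Psi_iter_fixed L nu i x z n : Psi L nu i x = x ->
  Nat.iter n (Psi L nu i) z = padd x (pscale ((/ L) ^ n) (psub z x)).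
Proof.
  intros Hfix. induction n as [|n IH]; simpl.
  - pt_coords; f_equal; ring.
  - rewrite IH, (Psi_fixed_form L nu i x) by auto. pt_coords; f_equal; ring.
Qed.

Lemma attractor_Psi L N nu K i z : attractor L N nu K -> (i < N)%nat -> K z -> K (Psi L nu i z).
Proof. intros (_ & _ & _ & Hself) Hi Kz. apply Hself. exists i. split; auto. exists z; auto. Qed.

Lemma fixed_point_in_attractor L N nu K i x : 1 < L -> attractor L N nu K -> (i < N)%nat ->
  Psi L nu i x = x -> K x.
Proof.
  intros HL Hatt Hi Hfix. pose proof Hatt as [[z Kz] [Hcl _]].
  assert (Hit : forall n, K (Nat.iter n (Psi L nu i) z)).
  { induction n as [|n IH]; simpl; auto. apply (attractor_Psi L N nu K); auto. }
  assert (HLinv : 0 < / L < 1).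
  { split; [apply Rinv_0_lt_compat; lra|]. rewrite <- Rinv_1. apply Rinv_lt_contravar; lra. }
  apply Hcl. intros e He.
  assert (HD : 0 <= Defs.dist x z) by apply sqrt_pos.
  destruct (pow_lt_1_zero (/ L) ltac:(rewrite Rabs_right; lra) (e / (Defs.dist x z + 1)))
    as [n Hn]; [apply Rdiv_lt_0_compat; lra|].
  specialize (Hn n (le_n n)). rewrite Rabs_right in Hn by (apply Rle_ge, pow_le; lra).
  exists (Nat.iter n (Psi L nu i) z). split; auto.
  rewrite (Psi_iter_fixed L nu i x), dist_toward by (assumption || lra || (apply pow_le; lra)).
  apply (Rmult_lt_compat_r (Defs.dist x z + 1)) in Hn; [|lra].
  unfold Rdiv in Hn. rewrite Rmult_assoc, Rinv_l in Hn by lra.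
  pose proof (pow_le (/ L) n ltac:(lra)). nra.
Qed.

Lemma bisector_equidistant x y z :
  dot (psub z (pscale (/ 2) (padd x y))) (psub y x) = 0 -> dist2 x z = dist2 y z.
Proof.
  intros H. apply Rminus_diag_uniq_sym. rewrite <- (Rmult_0_r (-2)), <- H.
  pt_coords. field.
Qed.

Lemma symmetry_axis_through_center l G h d a b c : dot d d <> 0 ->
  (forall v, In v l -> dist2 v G = dist2 a G) -> (forall v, In v l -> In (refl_line h d v) l) ->
  In a l -> In b l -> In c l -> a <> b -> a <> c -> b <> c -> dot (psub G h) d = 0.
Proof.
  intros Hd Hcirc Hrefl Ha Hb Hc Nab Nac Nbc.
  set (R := refl_line h d).
  apply refl_line_fixed; auto.
  apply (three_points_unique_center (R a) (R b) (R c)).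
  - unfold R; rewrite !refl_line_dist2 by auto. symmetry; auto.
  - unfold R; rewrite !refl_line_dist2 by auto. symmetry; auto.
  - rewrite (Hcirc (R a)), (Hcirc (R b)); unfold R; auto.
  - rewrite (Hcirc (R a)), (Hcirc (R c)); unfold R; auto.
  - intros E; apply refl_line_inj in E; auto.
  - intros E; apply refl_line_inj in E; auto.
  - intros E; apply refl_line_inj in E; auto.
Qed.

Section EssentialVertices.
Variables (L : R) (N : nat) (nu : nat -> pt) (l0 : list pt).
Hypotheses (HN : (0 < N)%nat) (HV : forall x, V0 L N nu x <-> In x l0)
  (Hsym : symmetry L N nu).

Definition cells_V0 : list pt := nodup pt_eq_dec (flat_map (fun i => map (Psi L nu i) l0) (seq 0 N)).

Lemma in_cells_V0 z : In z cells_V0 <-> exists i v, (i < N)%nat /\ In v l0 /\ z = Psi L nu i v.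
Proof.
  unfold cells_V0. rewrite nodup_In, in_flat_map. split.
  - intros [i [Hi Hz]]. apply in_seq in Hi. apply in_map_iff in Hz as [v [<- Hv]].
    exists i, v. repeat split; auto; lia.
  - intros [i [v [Hi [Hv ->]]]]. exists i. split; [apply in_seq; lia | apply in_map; auto].
Qed.

Lemma bisector_image_cell x y i v : In x l0 -> In y l0 -> x <> y -> (i < N)%nat -> In v l0 ->
  exists j v', (j < N)%nat /\ In v' l0 /\ refl_bisector x y (Psi L nu i v) = Psi L nu j v'.
Proof.
  intros Hx Hy Hxy Hi Hv.
  destruct (Hsym i x y Hi (proj2 (HV x) Hx) (proj2 (HV y) Hy) Hxy) as [j [Hj Hiff]].
  destruct (proj1 (Hiff (refl_bisector x y (Psi L nu i v)))) as [v' [Hv' E]].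
  { exists (Psi L nu i v). split; auto. exists v. split; auto. apply HV; auto. }
  exists j, v'. repeat split; auto. apply HV; auto.
Qed.

Lemma V0_concyclic : exists G, forall x y, In x l0 -> In y l0 -> dist2 x G = dist2 y G.
Proof.
  exists (barycenter cells_V0). intros x y Hx Hy.
  destruct (pt_eq_dec x y) as [<-|Hxy]; auto.
  assert (Hd : dot (psub y x) (psub y x) <> 0).
  { apply Rgt_not_eq, dot_self_pos. rewrite psub_eq0. auto. }
  apply bisector_equidistant, refl_line_perm_barycenter; auto.
  - intros E. apply (in_nil (a := Psi L nu 0 x)). rewrite <- E. apply in_cells_V0.
    exists 0%nat, x. auto.
  - rewrite <- refl_bisectorE. apply NoDup_Permutation_bis.
    + apply Injective_map_NoDup; [|apply NoDup_nodup].
      intros a b. rewrite refl_bisectorE. apply refl_line_inj; auto.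
    + rewrite length_map. lia.
    + intros z Hz. apply in_map_iff in Hz as [z' [<- Hz']].
      apply in_cells_V0 in Hz' as [i [v [Hi [Hv ->]]]].
      destruct (bisector_image_cell x y i v) as [j [v' [Hj [Hv' ->]]]]; auto.
      apply in_cells_V0. eauto.
Qed.

Lemma V0_axis_symmetric : L <> 0 -> NoDup l0 -> forall x y v, In x l0 -> In y l0 -> x <> y ->
  In v l0 -> In (refl_line (barycenter l0) (psub y x) v) l0.
Proof.
  intros HL Hnd x y v Hx Hy Hxy Hv.
  assert (Hd : dot (psub y x) (psub y x) <> 0).
  { apply Rgt_not_eq, dot_self_pos. rewrite psub_eq0. auto. }
  destruct (Hsym 0%nat x y HN (proj2 (HV x) Hx) (proj2 (HV y) Hy) Hxy) as [j [Hj Hiff]].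
  apply (reflected_cell_symmetric L nu 0 j (pscale (/ 2) (padd x y)) (psub y x) l0); auto.
  apply NoDup_Permutation_bis.
  - apply Injective_map_NoDup; auto.
    intros a b E. apply refl_line_inj, Psi_inj in E; auto.
  - rewrite !length_map. lia.
  - intros z Hz. apply in_map_iff in Hz as [u [<- Hu]].
    assert (Him : img (Psi L nu j) (V0 L N nu) (refl_bisector x y (Psi L nu 0 u))).
    { apply Hiff. exists (Psi L nu 0 u). split; auto. exists u. split; auto. apply HV; auto. }
    destruct Him as [u' [Hu' E]]. rewrite <- refl_bisectorE, E. apply in_map, HV; auto.
Qed.

End EssentialVertices.

Lemma V0_frame L N nu K l0 : simple_nested_fractal L N nu K -> NoDup l0 -> length l0 = 4%nat ->
  (forall x, V0 L N nu x <-> In x l0) ->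
  exists g p q, cross p q <> 0 /\
    forall v, In v l0 <-> v = padd g p \/ v = psub g p \/ v = padd g q \/ v = psub g q.
Proof.
  intros (HL & HN & _ & _ & _ & _ & Hsym & _) Hnd Hlen HV.
  destruct (V0_concyclic L N nu l0 ltac:(lia) HV Hsym) as [G HG].
  destruct l0 as [|v1 [|v2 [|v3 [|v4 [|]]]]]; simpl in Hlen; try discriminate.
  set (l0 := [v1; v2; v3; v4]) in *.
  pose proof (NoDup4 _ _ _ _ Hnd) as (N12 & N13 & _ & N23 & _ & _).
  assert (In1 : In v1 l0) by (simpl; auto). assert (In2 : In v2 l0) by (simpl; auto).
  assert (In3 : In v3 l0) by (simpl; auto).
  assert (Haxis : forall x y, In x l0 -> In y l0 -> x <> y ->
                    dot (psub G (barycenter l0)) (psub y x) = 0).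
  { intros x y Hx Hy Hxy. apply (symmetry_axis_through_center l0 G _ _ v1 v2 v3); auto.
    - apply Rgt_not_eq, dot_self_pos. rewrite psub_eq0. auto.
    - intros v Hv. apply (V0_axis_symmetric L N nu l0); auto; (lia || lra). }
  assert (Hbar : barycenter l0 = G).
  { symmetry. apply psub_eq0, (orthogonal_to_basis_eq0 _ (psub v2 v1) (psub v3 v1)); auto.
    apply (concyclic_not_collinear v1 v2 v3 G); auto. }
  exists G. apply (centered_concyclic_four l0 G (dist2 v1 G)); auto.
Qed.

Definition axis_unit (a b : R) : Prop :=
  (a = 1 /\ b = 0) \/ (a = -1 /\ b = 0) \/ (a = 0 /\ b = 1) \/ (a = 0 /\ b = -1).

Ltac case_axis H := destruct H as [[-> ->]|[[-> ->]|[[-> ->]|[-> ->]]]].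

Lemma axis_unit_sum_not_dilated_diff a b a' b' a1 b1 a2 b2 lam :
  axis_unit a b -> axis_unit a' b' -> axis_unit a1 b1 -> axis_unit a2 b2 ->
  ~ (a' = a /\ b' = b) -> ~ (a' = - a /\ b' = - b) -> 1 < lam ->
  a + a' = lam * (a1 - a2) -> b + b' = lam * (b1 - b2) -> False.
Proof.
  intros C1 C2 C3 C4 N1 N2 Hl E1 E2.
  case_axis C1; case_axis C2; case_axis C3; case_axis C4;
    first [ lra | apply N1; split; lra | apply N2; split; lra ].
Qed.

Lemma axis_unit_segment_not_axis_unit a b a' b' a'' b'' t :
  axis_unit a b -> axis_unit a' b' -> axis_unit a'' b'' ->
  ~ (a' = a /\ b' = b) -> ~ (a' = - a /\ b' = - b) -> 0 < t < 1 ->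
  (1 - t) * a - t * a' = a'' -> (1 - t) * b - t * b' = b'' -> False.
Proof.
  intros C1 C2 C3 N1 N2 Ht E1 E2.
  case_axis C1; case_axis C2; case_axis C3;
    first [ lra | apply N1; split; lra | apply N2; split; lra ].
Qed.

Lemma cross_combination_l a b p q : cross (padd (pscale a p) (pscale b q)) q = a * cross p q.
Proof. pt_coords; ring. Qed.

Lemma cross_combination_r a b p q : cross p (padd (pscale a p) (pscale b q)) = b * cross p q.
Proof. pt_coords; ring. Qed.

Lemma combination_coords_inj p q a b a' b' : cross p q <> 0 ->
  padd (pscale a p) (pscale b q) = padd (pscale a' p) (pscale b' q) -> a = a' /\ b = b'.
Proof.
  intros Hpq E. split; apply (Rmult_eq_reg_r (cross p q)); auto.
  - rewrite <- (cross_combination_l a b p q), <- (cross_combination_l a' b' p q), E. reflexivity.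
  - rewrite <- (cross_combination_r a b p q), <- (cross_combination_r a' b' p q), E. reflexivity.
Qed.

Lemma axis_unit_opp a b : axis_unit a b -> axis_unit (- a) (- b).
Proof.
  intros C. unfold axis_unit.
  case_axis C; [right; left | left | right; right; right | right; right; left]; split; ring.
Qed.

Definition frame (g p q : pt) (a b : R) : pt := padd g (padd (pscale a p) (pscale b q)).
Definition antipode (g v : pt) : pt := psub (pscale 2 g) v.

Lemma antipodeK g v : antipode g (antipode g v) = v.
Proof. unfold antipode; pt_coords; f_equal; ring. Qed.

Lemma antipode_frame g p q a b : antipode g (frame g p q a b) = frame g p q (- a) (- b).
Proof. unfold antipode, frame; pt_coords; f_equal; ring. Qed.

Lemma frame_sub g p q a b a' b' :
  psub (frame g p q a b) (frame g p q a' b') = padd (pscale (a - a') p) (pscale (b - b') q).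
Proof. unfold frame; pt_coords; f_equal; ring. Qed.

Lemma frame_inj g p q a b a' b' : cross p q <> 0 ->
  frame g p q a b = frame g p q a' b' -> a = a' /\ b = b'.
Proof.
  intros Hpq E.
  assert (Z : padd (pscale (a - a') p) (pscale (b - b') q) = padd (pscale 0 p) (pscale 0 q)).
  { rewrite <- (frame_sub g p q a b a' b'), E. unfold frame; pt_coords; f_equal; ring. }
  apply combination_coords_inj in Z as [Za Zb]; auto; lra.
Qed.

Section Frame.
Variables (l0 : list pt) (g p q : pt).
Hypotheses (Hpq : cross p q <> 0)
  (Hframe : forall v, In v l0 <-> v = padd g p \/ v = psub g p \/ v = padd g q \/ v = psub g q).

Lemma in_frame v : In v l0 <-> exists a b, axis_unit a b /\ v = frame g p q a b.
Proof.
  rewrite Hframe. unfold frame. split.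
  - intros [-> | [-> | [-> | ->]]]; [exists 1, 0 | exists (-1), 0 | exists 0, 1 | exists 0, (-1)];
      (split; [unfold axis_unit; lra | pt_coords; f_equal; ring]).
  - intros [a [b [C ->]]].
    case_axis C; [left | right; left | right; right; left | right; right; right];
      pt_coords; f_equal; ring.
Qed.

Lemma antipode_in v : In v l0 -> In (antipode g v) l0.
Proof.
  rewrite !in_frame. intros [a [b [C ->]]]. rewrite antipode_frame.
  exists (- a), (- b). split; auto. apply axis_unit_opp; auto.
Qed.

Lemma adjacent_coords a b a' b' :
  frame g p q a' b' <> frame g p q a b -> frame g p q a' b' <> antipode g (frame g p q a b) ->
  ~ (a' = a /\ b' = b) /\ ~ (a' = - a /\ b' = - b).
Proof. rewrite antipode_frame. split; intros [-> ->]; auto. Qed.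

Lemma adjacent_not_dilated_chord v v' u1 u2 lam : In v l0 -> In v' l0 ->
  v' <> v -> v' <> antipode g v -> In u1 l0 -> In u2 l0 -> 1 < lam ->
  psub v (antipode g v') <> pscale lam (psub u1 u2).
Proof.
  rewrite !in_frame. intros [a [b [C1 ->]]] [a' [b' [C2 ->]]] N1 N2 [a1 [b1 [C3 ->]]]
    [a2 [b2 [C4 ->]]] Hl E.
  destruct (adjacent_coords a b a' b' N1 N2) as [M1 M2].
  rewrite antipode_frame, !frame_sub in E.
  assert (E' : padd (pscale (a - - a') p) (pscale (b - - b') q)
               = padd (pscale (lam * (a1 - a2)) p) (pscale (lam * (b1 - b2)) q))
    by (rewrite E; pt_coords; f_equal; ring).
  apply combination_coords_inj in E' as [Ea Eb]; auto.
  apply (axis_unit_sum_not_dilated_diff a b a' b' a1 b1 a2 b2 lam); auto; lra.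
Qed.

Lemma adjacent_segment_avoids_V0 v v' t : In v l0 -> In v' l0 ->
  v' <> v -> v' <> antipode g v -> 0 < t < 1 ->
  ~ In (padd v (pscale t (psub (antipode g v') v))) l0.
Proof.
  rewrite !in_frame. intros [a [b [C1 ->]]] [a' [b' [C2 ->]]] N1 N2 Ht [a'' [b'' [C3 E]]].
  destruct (adjacent_coords a b a' b' N1 N2) as [M1 M2].
  replace (padd (frame g p q a b)
             (pscale t (psub (antipode g (frame g p q a' b')) (frame g p q a b))))
    with (frame g p q ((1 - t) * a - t * a') ((1 - t) * b - t * b')) in E
    by (unfold antipode, frame; pt_coords; f_equal; ring).
  apply frame_inj in E as [Ea Eb]; auto.
  apply (axis_unit_segment_not_axis_unit a b a' b' a'' b'' t); auto.
Qed.

End Frame.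

Section Words.
Variables (L : R) (nu : nat -> pt).
Hypothesis (HL : 1 < L).

Fixpoint word_pos (w : list nat) : pt :=
  match w with
  | [] => (0, 0)
  | i :: w' => padd (nu i) (pscale L (word_pos w'))
  end.

Lemma word_shift_pos e w : word_shift L nu e w = pscale (powerRZ L e) (word_pos w).
Proof.
  revert e. induction w as [|i w IH]; intros e; simpl.
  - pt_coords; f_equal; ring.
  - rewrite IH, powerRZ_add by lra. simpl. destruct (nu i). pt_coords. f_equal; ring.
Qed.

Lemma complex_shift0 w : complex_shift L nu 0 w = pscale L (word_pos w).
Proof. unfold complex_shift. rewrite word_shift_pos. simpl. f_equal. ring. Qed.

Lemma word_pos_snoc w a : word_pos (w ++ [a]) = padd (word_pos w) (pscale (L ^ length w) (nu a)).
Proof.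
  induction w as [|i w IH]; simpl.
  - destruct (nu a). pt_coords; f_equal; ring.
  - rewrite IH. destruct (nu a), (nu i), (word_pos w). pt_coords; f_equal; ring.
Qed.

Lemma word_pos_pad0 w k : nu 0%nat = (0, 0) -> word_pos (w ++ repeat 0%nat k) = word_pos w.
Proof.
  intros Hnu0. induction w as [|i w IH]; simpl; [|rewrite IH; reflexivity].
  induction k as [|k IHk]; simpl; auto. rewrite IHk, Hnu0. pt_coords; f_equal; ring.
Qed.

(* [word_map w v = L^-n (v + complex_shift 0 w)] rescales a vertex of the 0-complex with address
   w into K^<0>; by word_map_snoc it is Psi_(w_n) (... (Psi_(w_1) v)). *)
Definition word_map (w : list nat) (v : pt) : pt :=
  pscale (/ L ^ length w) (padd v (pscale L (word_pos w))).

Lemma word_map_nil v : word_map [] v = v.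
Proof. unfold word_map; simpl; pt_coords; f_equal; field. Qed.

Lemma word_map_snoc w a v : word_map (w ++ [a]) v = Psi L nu a (word_map w v).
Proof.
  unfold word_map, Psi. rewrite word_pos_snoc, length_app, Nat.add_1_r. simpl.
  assert (Hk : 0 < L ^ length w) by (apply pow_lt; lra).
  destruct (nu a), (word_pos w). pt_coords. f_equal; field; lra.
Qed.

Lemma word_map_antipode_swap g w w' v v' : length w = length w' ->
  word_map w v = word_map w' v' -> word_map w (antipode g v') = word_map w' (antipode g v).
Proof.
  unfold word_map, antipode. intros El E. rewrite <- El in *.
  set (k := / L ^ length w) in *. destruct (word_pos w), (word_pos w'). pt_coords. f_equal; nra.
Qed.

Lemma word_map_sub w z z' : psub z z' = pscale (L ^ length w) (psub (word_map w z) (word_map w z')).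
Proof.
  unfold word_map. assert (Hk : 0 < L ^ length w) by (apply pow_lt; lra).
  destruct (word_pos w). pt_coords. f_equal; field; lra.
Qed.

End Words.

Lemma Psi_padd L nu i z u : Psi L nu i (padd z u) = padd (Psi L nu i z) (pscale (/ L) u).
Proof. unfold Psi. destruct (nu i). pt_coords. f_equal; ring. Qed.

Fixpoint pt_index (x : pt) (l : list pt) : nat :=
  match l with
  | [] => 0%nat
  | y :: l' => if pt_eq_dec x y then 0%nat else S (pt_index x l')
  end.

Lemma pt_index_lt x l : In x l -> (pt_index x l < length l)%nat.
Proof.
  induction l as [|y l IH]; simpl; [tauto|]. intros H.
  destruct (pt_eq_dec x y); [lia|]. destruct H as [->|H]; [congruence|]. specialize (IH H); lia.
Qed.

Lemma nth_pt_index x l d : In x l -> nth (pt_index x l) l d = x.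
Proof.
  induction l as [|y l IH]; simpl; [tauto|]. intros H.
  destruct (pt_eq_dec x y) as [->|Hxy]; auto. destruct H as [->|H]; [congruence | auto].
Qed.

Lemma pt_index_inj x y l : In x l -> In y l -> pt_index x l = pt_index y l -> x = y.
Proof.
  intros Hx Hy E. rewrite <- (nth_pt_index x l (0, 0)), <- (nth_pt_index y l (0, 0)), E; auto.
Qed.

Lemma pt_index_nth a l d : NoDup l -> (a < length l)%nat -> pt_index (nth a l d) l = a.
Proof.
  revert a. induction l as [|y l IH]; intros a Hnd Ha; simpl in *; [lia|].
  apply NoDup_cons_iff in Hnd as [Hy Hnd]. destruct a as [|a]; simpl.
  - destruct (pt_eq_dec y y); congruence.
  - destruct (pt_eq_dec (nth a l d) y) as [E|_].
    + exfalso. apply Hy. rewrite <- E. apply nth_In. lia.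
    + f_equal. apply IH; auto. lia.
Qed.

Section Labelling.
Variables (L : R) (N : nat) (nu : nat -> pt) (K : pt -> Prop) (l0 : list pt) (g p q : pt).
Hypotheses (HL : 1 < L) (HN : (0 < N)%nat) (Hnu0 : nu 0%nat = (0, 0))
  (Hatt : attractor L N nu K) (Hnest : nesting L N nu K)
  (HV : forall x, V0 L N nu x <-> In x l0) (Hpq : cross p q <> 0)
  (Hframe : forall v, In v l0 <-> v = padd g p \/ v = psub g p \/ v = padd g q \/ v = psub g q)
  (Hl0_nodup : NoDup l0) (Hl0_length : length l0 = 4%nat).

Definition letters_below (w : list nat) : Prop := forall i, In i w -> (i < N)%nat.

Lemma word_map_in_K w v : K v -> letters_below w -> K (word_map L nu w v).
Proof.
  intros Kv. induction w as [|a w IH] using rev_ind; intros Hw.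
  - rewrite word_map_nil; auto.
  - rewrite word_map_snoc by auto. apply (attractor_Psi L N nu K); auto.
    + apply Hw, in_or_app. simpl; auto.
    + apply IH. intros i Hi; apply Hw, in_or_app; auto.
Qed.

Lemma V0_in_K v : In v l0 -> K v.
Proof.
  intros Hv. apply HV in Hv as [[c [Hc Hfix]] _].
  apply (fixed_point_in_attractor L N nu K c v); auto.
Qed.

Lemma nesting_vertex a b x y : (a < N)%nat -> (b < N)%nat -> a <> b -> K x -> K y ->
  Psi L nu a x = Psi L nu b y -> In x l0.
Proof.
  intros Ha Hb Hab Kx Ky E.
  destruct (proj1 (Hnest a b Ha Hb Hab (Psi L nu a x))) as [[u [Hu Eu]] _].
  { split; [exists x | exists y]; auto. }
  apply Psi_inj in Eu; [subst | lra]. apply HV; auto.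
Qed.

(* With c fixing v and c' fixing v', the cells also meet at Psi_a (Psi_c (antipode v')) =
   Psi_b (Psi_c' (antipode v)); by nesting Psi_c (antipode v') is then an essential vertex, but it
   lies strictly inside the segment from v to antipode v'. *)
Lemma cells_meet_not_adjacent a b v v' : (a < N)%nat -> (b < N)%nat -> a <> b ->
  In v l0 -> In v' l0 -> v' <> v -> v' <> antipode g v -> Psi L nu a v <> Psi L nu b v'.
Proof.
  intros Ha Hb Hab Hv Hv' N1 N2 E.
  destruct (proj2 (HV v) Hv) as [[c [Hc Fc]] _].
  destruct (proj2 (HV v') Hv') as [[c' [Hc' Fc']] _].
  set (y1 := Psi L nu c (antipode g v')). set (y2 := Psi L nu c' (antipode g v)).
  assert (Hy1 : y1 = padd v (pscale (/ L) (psub (antipode g v') v)))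
    by (apply Psi_fixed_form; auto).
  assert (Hy2 : y2 = padd v' (pscale (/ L) (psub (antipode g v) v')))
    by (apply Psi_fixed_form; auto).
  assert (Ky : forall c0 u, (c0 < N)%nat -> In u l0 -> K (Psi L nu c0 (antipode g u))).
  { intros c0 u Hc0 Hu. apply (attractor_Psi L N nu K); auto.
    apply V0_in_K, (antipode_in l0 g p q Hpq Hframe); auto. }
  apply (adjacent_segment_avoids_V0 l0 g p q Hpq Hframe v v' (/ L)); auto.
  - split; [apply Rinv_0_lt_compat; lra|]. rewrite <- Rinv_1. apply Rinv_lt_contravar; lra.
  - rewrite <- Hy1. apply (nesting_vertex a b y1 y2); try apply Ky; auto.
    rewrite Hy1, Hy2, !Psi_padd, E.
    replace (psub (antipode g v) v') with (psub (antipode g v') v)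
      by (unfold antipode; pt_coords; f_equal; ring).
    reflexivity.
Qed.

(* Otherwise the cells also meet at the images of antipode v' and antipode v, and nesting makes
   both word_map w v and word_map w (antipode v') essential vertices; L^n > 1 times their
   difference would be the edge v - antipode v' of V_0. *)
Lemma junction_vertices a b w w' v v' : (a < N)%nat -> (b < N)%nat -> a <> b ->
  length w = length w' -> letters_below w -> letters_below w' -> In v l0 -> In v' l0 ->
  Psi L nu a (word_map L nu w v) = Psi L nu b (word_map L nu w' v') ->
  v' = v \/ v' = antipode g v.
Proof.
  intros Ha Hb Hab Hlen Hw Hw' Hv Hv' E.
  destruct (classic (v' = v \/ v' = antipode g v)) as [|Hadj]; auto. exfalso.
  apply not_or_and in Hadj as [N1 N2].
  assert (Hmeet : forall z z', In z l0 -> In z' l0 ->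
            Psi L nu a (word_map L nu w z) = Psi L nu b (word_map L nu w' z') ->
            In (word_map L nu w z) l0).
  { intros z z' Hz Hz' Ez. apply (nesting_vertex a b _ (word_map L nu w' z')); auto;
      apply word_map_in_K; auto; apply V0_in_K; auto. }
  destruct (Nat.eq_dec (length w) 0) as [H0|Hpos].
  - apply length_zero_iff_nil in H0 as ->. symmetry in Hlen. apply length_zero_iff_nil in Hlen as ->.
    rewrite !word_map_nil in E. apply (cells_meet_not_adjacent a b v v'); auto.
  - assert (E' : Psi L nu a (word_map L nu w (antipode g v'))
                 = Psi L nu b (word_map L nu w' (antipode g v))).
    { rewrite <- !word_map_snoc by auto. apply word_map_antipode_swap.
      - rewrite !length_app, Hlen. reflexivity.
      - rewrite !word_map_snoc; auto. }
    apply (adjacent_not_dilated_chord l0 g p q Hpq Hframe v v'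
             (word_map L nu w v) (word_map L nu w (antipode g v')) (L ^ length w)); auto.
    + apply (Hmeet v v'); auto.
    + apply (Hmeet _ (antipode g v)); auto; apply (antipode_in l0 g p q Hpq Hframe); auto.
    + apply Rlt_pow_R1; auto. lia.
    + apply word_map_sub. lra.
Qed.

Lemma word_map_vertex_eq n : forall w w', length w = n -> length w' = n ->
  letters_below w -> letters_below w' -> forall v v', In v l0 -> In v' l0 ->
  word_map L nu w v = word_map L nu w' v' -> v' = v \/ v' = antipode g v.
Proof.
  induction n as [|n IH]; intros w w' Hl Hl' Hw Hw' v v' Hv Hv' E.
  - apply length_zero_iff_nil in Hl as ->. apply length_zero_iff_nil in Hl' as ->.
    rewrite !word_map_nil in E. auto.
  - destruct (exists_last (l := w)) as [w0 [a ->]]; [intros ->; discriminate|].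
    destruct (exists_last (l := w')) as [w0' [b ->]]; [intros ->; discriminate|].
    rewrite length_app in Hl, Hl'. simpl in Hl, Hl'.
    assert (Hsplit : forall u c, letters_below (u ++ [c]) -> letters_below u /\ (c < N)%nat).
    { intros u c Hu. split; [intros i Hi | ]; apply Hu, in_or_app; simpl; auto. }
    destruct (Hsplit _ _ Hw) as [Hw0 Ha]. destruct (Hsplit _ _ Hw') as [Hw0' Hb].
    rewrite !word_map_snoc in E by auto.
    destruct (Nat.eq_dec a b) as [<-|Hab].
    + apply Psi_inj in E; [|lra]. apply (IH w0 w0'); auto; lia.
    + apply (junction_vertices a b w0 w0'); auto. lia.
Qed.

Lemma complex_vertex_eq w w' v v' : valid_word N w -> valid_word N w' -> In v l0 -> In v' l0 ->
  padd v (complex_shift L nu 0 w) = padd v' (complex_shift L nu 0 w') ->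
  v' = v \/ v' = antipode g v.
Proof.
  intros [_ Hw] [_ Hw'] Hv Hv' E. rewrite !complex_shift0 in E by auto.
  set (n := Nat.max (length w) (length w')).
  assert (Hpad : forall u, (length u <= n)%nat -> letters_below u ->
            let u' := u ++ repeat 0%nat (n - length u) in
            length u' = n /\ letters_below u' /\ word_pos L nu u' = word_pos L nu u).
  { intros u Hu Hlet u'. repeat split.
    - unfold u'. rewrite length_app, repeat_length. lia.
    - intros i Hi. apply in_app_or in Hi as [Hi|Hi]; auto. apply repeat_spec in Hi. lia.
    - apply word_pos_pad0; auto. }
  destruct (Hpad w ltac:(lia) Hw) as (Hl & Hlw & Hpos).
  destruct (Hpad w' ltac:(lia) Hw') as (Hl' & Hlw' & Hpos').
  apply (word_map_vertex_eq n _ _ Hl Hl' Hlw Hlw'); auto.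
  unfold word_map. rewrite Hl, Hl', Hpos, Hpos', E. reflexivity.
Qed.

(* [diag_coord (a p + b q) = (a + b) / 2]. *)
Definition diag_coord (z : pt) : R := (cross z q + cross p z) / (2 * cross p q).
Definition parity (T : pt) : bool := Z.odd (Zfloor (diag_coord T)).
Definition orient (b : bool) (v : pt) : pt := if b then antipode g v else v.

Lemma diag_coord_step T v : In v l0 -> exists s, (s = 1 \/ s = -1)%Z /\
  diag_coord (padd T (psub v (antipode g v))) = diag_coord T + IZR s.
Proof.
  rewrite (in_frame l0 g p q Hpq Hframe). intros [a [b [C ->]]].
  replace (diag_coord (padd T (psub (frame g p q a b) (antipode g (frame g p q a b)))))
    with (diag_coord T + (a + b)) by (unfold diag_coord, frame, antipode; pt_coords; field; auto).
  case_axis C; [exists 1%Z | exists (-1)%Z | exists 1%Z | exists (-1)%Z]; split; auto; lra.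
Qed.

Lemma parity_flip T T' s : (s = 1 \/ s = -1)%Z -> diag_coord T' = diag_coord T + IZR s ->
  parity T' = negb (parity T).
Proof.
  intros Hs E. unfold parity. rewrite E, Zfloor_addz, Z.odd_add.
  destruct Hs as [-> | ->]; destruct (Z.odd (Zfloor (diag_coord T))); reflexivity.
Qed.

Lemma orient_well_defined w w' v v' : valid_word N w -> valid_word N w' -> In v l0 -> In v' l0 ->
  padd v (complex_shift L nu 0 w) = padd v' (complex_shift L nu 0 w') ->
  orient (parity (complex_shift L nu 0 w)) v = orient (parity (complex_shift L nu 0 w')) v'.
Proof.
  intros Hw Hw' Hv Hv' E.
  set (T := complex_shift L nu 0 w) in *. set (T' := complex_shift L nu 0 w') in *.
  destruct (complex_vertex_eq w w' v v') as [<- | ->]; auto.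
  - replace T' with T by (pt_coords; f_equal; lra). reflexivity.
  - replace T' with (padd T (psub v (antipode g v))) in *
      by (unfold antipode in *; pt_coords; f_equal; lra).
    destruct (diag_coord_step T v Hv) as [s [Hs Es]].
    rewrite (parity_flip T _ s Hs Es). unfold orient.
    destruct (parity T); simpl; auto. rewrite antipodeK. reflexivity.
Qed.

(* Any (w, v) with x = v + complex_shift 0 w gives the same label (orient_well_defined); outside
   V_0^<infty> the label is junk. *)
Definition address (x : pt) : list nat * pt :=
  epsilon (inhabits ([], (0, 0))) (fun wv => valid_word N (fst wv) /\ In (snd wv) l0 /\
                                             x = padd (snd wv) (complex_shift L nu 0 (fst wv))).

Definition label (x : pt) : nat :=
  pt_index (orient (parity (complex_shift L nu 0 (fst (address x)))) (snd (address x))) l0.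

Lemma label_eq w v : valid_word N w -> In v l0 ->
  label (padd v (complex_shift L nu 0 w)) = pt_index (orient (parity (complex_shift L nu 0 w)) v) l0.
Proof.
  intros Hw Hv. unfold label.
  destruct (epsilon_spec (inhabits ([], (0, 0)))
              (fun wv => valid_word N (fst wv) /\ In (snd wv) l0 /\
                         padd v (complex_shift L nu 0 w)
                         = padd (snd wv) (complex_shift L nu 0 (fst wv))))
    as (Hw' & Hv' & E); [exists (w, v); auto|].
  fold (address (padd v (complex_shift L nu 0 w))) in *. f_equal. symmetry.
  apply orient_well_defined; auto.
Qed.

Lemma orient_in b v : In v l0 -> In (orient b v) l0.
Proof. destruct b; simpl; auto. apply (antipode_in l0 g p q Hpq Hframe). Qed.

Lemma label_V0 v : In v l0 -> label v = pt_index v l0.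
Proof.
  intros Hv.
  assert (H0 : complex_shift L nu 0 [0%nat] = (0, 0)).
  { rewrite complex_shift0 by auto. simpl. rewrite Hnu0. pt_coords. f_equal; ring. }
  assert (Hvalid : valid_word N [0%nat]) by (split; [discriminate | intros i [<- | []]; lia]).
  replace v with (padd v (complex_shift L nu 0 [0%nat])) at 1
    by (rewrite H0; pt_coords; f_equal; ring).
  rewrite label_eq, H0 by auto. unfold parity, diag_coord.
  replace ((cross (0, 0) q + cross p (0, 0)) / (2 * cross p q)) with 0
    by (unfold cross; simpl; field; auto).
  rewrite ZfloorZ. reflexivity.
Qed.

Lemma VMM0 x : VMM L N nu 0 x <-> In x l0.
Proof.
  unfold VMM. simpl. split.
  - intros [v [Hv ->]]. apply HV in Hv.
    replace (pscale 1 v) with v by (pt_coords; f_equal; ring). auto.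
  - intros Hx. exists x. split; [apply HV; auto | pt_coords; f_equal; ring].
Qed.

Lemma orient_in_RM b : in_RM L N nu 0 (orient b).
Proof.
  split; [|split].
  - destruct b; [exists g, PI | exists (0, 0), 0]; intros x; unfold orient, antipode, rotation, rot;
      rewrite ?cos_PI, ?sin_PI, ?cos_0, ?sin_0; pt_coords; f_equal; ring.
  - intros x Hx. apply VMM0, orient_in, VMM0; auto.
  - intros y Hy. apply VMM0 in Hy. exists (orient b y). split; [apply VMM0, orient_in; auto|].
    destruct b; simpl; auto. apply antipodeK.
Qed.

Theorem good_labelling_order0 : good_labelling L N nu 4 0 label.
Proof.
  split; [|split; [|split]].
  - intros x [w [Hw [u [Hu ->]]]]. apply VMM0 in Hu. rewrite label_eq by auto.
    rewrite <- Hl0_length. apply pt_index_lt, orient_in; auto.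
  - intros x y Hx Hy E. apply VMM0 in Hx, Hy. rewrite !label_V0 in E by auto.
    apply (pt_index_inj x y l0); auto.
  - intros a Ha. exists (nth a l0 (0, 0)).
    assert (Hin : In (nth a l0 (0, 0)) l0) by (apply nth_In; lia).
    split; [apply VMM0; auto|]. rewrite label_V0 by auto. apply pt_index_nth; auto. lia.
  - intros w Hw. exists (orient (parity (complex_shift L nu 0 w))). split; [apply orient_in_RM|].
    intros v [u [Hu ->]]. apply VMM0 in Hu.
    replace (psub (padd u (complex_shift L nu 0 w)) (complex_shift L nu 0 w)) with u
      by (pt_coords; f_equal; ring).
    rewrite label_eq, label_V0 by auto using orient_in. reflexivity.
Qed.

End Labelling.

Theorem corollary3p16 (L : R) (N : nat) (nu : nat -> pt) (K : pt -> Prop) :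
  simple_nested_fractal L N nu K ->
  set_card (V0 L N nu) 4 ->
  good_labelling_property L N nu.
Proof.
  intros Hsnf [l0 [Hnd [Hlen HV]]].
  destruct (V0_frame L N nu K l0 Hsnf Hnd Hlen HV) as [g [p [q [Hpq Hframe]]]].
  destruct Hsnf as (HL & HN & Hnu0 & Hatt & _ & Hnest & _).
  exists 4%nat. split; [exists l0; auto|].
  exists 0%Z, (label L N nu l0 g p q).
  apply (good_labelling_order0 L N nu K); auto. lia.
Qed.
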